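(* Let $X$ be a binary $N\times t$ matrix that is 3-good, let $S\subseteq[t]$ with $|S|=3$, $\mathbf{y}=r(X,S)$, $H=H(X,3,\mathbf{y})=([t],E)$, $L_1=\log_2\log_2 t$, $L_2=3L_1$. Let $G'=([t],E')$ be the graph in which distinct vertices $v_1,v_2$ are adjacent iff at least $L_2$ hyperedges of $E$ contain both; let $E_1\subseteq E$ be the set of hyperedges containing some edge of $G'$ as a subset, and $E_2=E\setminus E_1$. Then there exists a partition of $E_2$ into $M\le 96L_1^2L_2^2$ disjoint sets $E_2=\bigsqcup_{i=1}^M E_{2,i}$ such that: (1) no two distinct intersecting hyperedges lie in the same set, i.e. if $e_1\in E_{2,i}$, $e_2\in E_{2,j}$, $e_1\ne e_2$ and $e_1\cap e_2\neq\emptyset$, then $i\neq j$; (2) if $e_1\in E_{2,i}$, $e_2\in E_{2,j}$, $e_1\ne e_2$, and there is a hyperedge $e\in E$ (from $E_1$ or $E_2$) with $e\cap e_1\neq\emptyset$ and $e\cap e_2\neq\emptyset$, then $i\neq j$.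
   Context: For a binary $N\times t$ matrix $X$ with columns $x(1),\dots,x(t)$ and $S\subseteq[t]$, $r(X,S)=\bigvee_{j\in S}x(j)$ (coordinatewise Boolean OR). For $\mathbf{y}\in\{0,1\}^N$, $H(X,3,\mathbf{y})$ is the $3$-uniform hypergraph on $[t]$ whose hyperedges are all $3$-element $S\subseteq[t]$ with $r(X,S)=\mathbf{y}$. A $(3,k)$ configuration of size $L$ is a set of $L$ hyperedges $e_1,\dots,e_L$ with a set $U$, $|U|=k$, such that $e_i\cap e_j=U$ for all $i\ne j$. Fix $p\in(0,1)$; $\Pr_1(s,w)$ is the probability that the OR of $s$ independent uniformly random length-$N$ binary columns of weight $\lfloor pN\rfloor$ equals a fixed vector of weight $w$; $\Pr_2(s,w_1,w)$ is the probability that the OR of $s$ such columns together with a fixed column $\mathbf{y}_1$ of weight $w_1$ equals a fixed vector $\mathbf{y}$ of weight $w$ with $\mathbf{y}\vee\mathbf{y}_1=\mathbf{y}$. With $L_1=\log_2\log_2 t$, $X$ is 3-good if: (1) for every $\mathbf{y}$, $H(X,3,\mathbf{y})$ has no $(3,1)$ configuration of size $L_1$; (2) for every $\mathbf{y}$ with $|\mathbf{y}|=w$, $H(X,3,\mathbf{y})$ has no $(3,0)$ configuration of size $10\max(t^3\Pr_1(3,w),N)$; (3) for all $\mathbf{y},\mathbf{y}_1$ with $\mathbf{y}\vee\mathbf{y}_1=\mathbf{y}$, $|\mathbf{y}_1|=w_1$, $|\mathbf{y}|=w$, the number of $j$ with $\mathbf{y}_1\vee x(j)=\mathbf{y}$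 is less than $10B(N,t)$, where $B(N,t)=t\Pr_2(1,w_1,w)$ if this exceeds $N$, $B(N,t)=N$ if $t^{-1/\sqrt{L_1}}\le t\Pr_2(1,w_1,w)\le N$, and $B(N,t)=L_1/10$ if $t\Pr_2(1,w_1,w)<t^{-1/\sqrt{L_1}}$; (4) for every $\mathbf{y}$ with $|\mathbf{y}|=w$ and integer $w_1\le w$, the number of pairwise disjoint pairs $\{j_1,j_2\}\subseteq[t]$ with $x(j_1)\vee x(j_2)\vee\mathbf{y}=\mathbf{y}$ and $|x(j_1)\vee x(j_2)|=w_1$ is less than $10\max(N,\binom{w}{w_1}t^2\Pr_1(2,w_1))$. *)

From mathcomp Require Import all_boot all_algebra.
From Stdlib Require Import Reals.

Set Implicit Arguments.
Unset Strict Implicit.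
Unset Printing Implicit Defensive.

Definition bvec (N : nat) := {ffun 'I_N -> bool}.

Definition wt N (v : bvec N) : nat := #|[set i | v i]|.

Definition bor N (u v : bvec N) : bvec N := [ffun i => u i || v i].

Definition colv N t (X : 'M[bool]_(N, t)) (j : 'I_t) : bvec N :=
  [ffun i => X i j].

Definition rX N t (X : 'M[bool]_(N, t)) (S : {set 'I_t}) : bvec N :=
  [ffun i => [exists j in S, X i j]].

Definition ORs N s (c : {ffun 'I_s -> bvec N}) : bvec N :=
  [ffun i => [exists j, c j i]].

(* canonical fixed vector of weight w (first w coordinates), w <= N *)
Definition firstw N (w : nat) : bvec N := [ffun i : 'I_N => (i < w)%N].

Definition kp (N : nat) (p : R) : nat := Z.to_nat (Int_part (p * INR N)).

(* Pr_1(s,w): probability that the OR of s independent uniformly random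
   weight-floor(pN) columns equals a fixed vector of weight w. *)
Definition Pr1 (N : nat) (p : R) (s w : nat) : R :=
  (INR #|[set c : {ffun 'I_s -> bvec N} |
           [forall j, wt (c j) == kp N p] && (ORs c == firstw N w)]|
   / (INR 'C(N, kp N p) ^ s))%R.

(* Pr_2(s,w1,w): probability that the OR of s such columns together with a
   fixed column y1 of weight w1 equals a fixed y of weight w with y1 <= y. *)
Definition Pr2 (N : nat) (p : R) (s w1 w : nat) : R :=
  (INR #|[set c : {ffun 'I_s -> bvec N} |
           [forall j, wt (c j) == kp N p] &&
           (bor (ORs c) (firstw N w1) == firstw N w)]|
   / (INR 'C(N, kp N p) ^ s))%R.

Definition log2 (x : R) : R := (ln x / ln 2)%R.

Definition L1 (t : nat) : R := log2 (log2 (INR t)).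

Definition Hedges N t (X : 'M[bool]_(N, t)) (y : bvec N) : {set {set 'I_t}} :=
  [set e : {set 'I_t} | (#|e| == 3) && (rX X e == y)].

Definition config N t (X : 'M[bool]_(N, t)) (y : bvec N) (k : nat) (L : R)
  (F : {set {set 'I_t}}) : Prop :=
  F \subset Hedges X y /\ (L <= INR #|F|)%R /\
  exists U : {set 'I_t}, #|U| = k /\
    forall e1 e2, e1 \in F -> e2 \in F -> e1 != e2 -> e1 :&: e2 = U.

Definition Bfun (N t : nat) (p : R) (w1 w : nat) : R :=
  let v := (INR t * Pr2 N p 1 w1 w)%R in
  if Rlt_dec (INR N) v then v
  else if Rle_dec (Rpower (INR t) (- / sqrt (L1 t))) v then INR N
  else (L1 t / 10)%R.

Definition good3 N t (p : R) (X : 'M[bool]_(N, t)) : Prop :=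
  (forall (y : bvec N) F, ~ config X y 1 (L1 t) F) /\
  (forall (y : bvec N) F,
      ~ config X y 0 (10 * Rmax (INR t ^ 3 * Pr1 N p 3 (wt y)) (INR N))%R F) /\
  (forall y y1 : bvec N, bor y y1 = y ->
      (INR #|[set j | bor y1 (colv X j) == y]|
        < 10 * Bfun N t p (wt y1) (wt y))%R) /\
  (forall (y : bvec N) (w1 : nat), (w1 <= wt y)%N ->
     forall P : {set {set 'I_t}},
       (forall q, q \in P ->
          #|q| = 2 /\ bor (rX X q) y = y /\ wt (rX X q) = w1) ->
       (forall q1 q2, q1 \in P -> q2 \in P -> q1 != q2 -> [disjoint q1 & q2]) ->
       (INR #|P| < 10 * Rmax (INR N) (INR 'C(wt y, w1) * INR t ^ 2 * Pr1 N p 2 w1))%R).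

Definition adjG N t (X : 'M[bool]_(N, t)) (y : bvec N) (L2 : R) (v1 v2 : 'I_t) : bool :=
  (v1 != v2) &&
  (if Rle_dec L2 (INR #|[set e in Hedges X y | (v1 \in e) && (v2 \in e)]|)
   then true else false).

Definition E1 N t (X : 'M[bool]_(N, t)) (y : bvec N) (L2 : R) : {set {set 'I_t}} :=
  [set e in Hedges X y |
     [exists v1, exists v2, [&& v1 \in e, v2 \in e & adjG X y L2 v1 v2]]].

Definition E2 N t (X : 'M[bool]_(N, t)) (y : bvec N) (L2 : R) : {set {set 'I_t}} :=
  Hedges X y :\: E1 X y L2.

From mathcomp Require Import all_boot all_algebra.
From Stdlib Require Import Reals Lra.
From mathcomp Require Import zify.

Set Implicit Arguments.
Unset Strict Implicit.
Unset Printing Implicit Defensive.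

(* Fix at every vertex v a maximum
   sunflower of hyperedges with kernel {v}: by condition (1) of 3-goodness it
   has m < L_1 petals, and its at most 2m petal vertices meet every hyperedge
   through v outside v.  Hence every G'-neighbour w of v is a petal vertex
   (otherwise the hyperedges through v and w are of the form {v, w, u} with u
   a petal vertex, fewer than L_2 of them), and at most 2m L_2 hyperedges
   pass through v without containing a G'-neighbour of v.  If a hyperedge meets
   e_1 in v and e_2 in w, then w is at G'-distance at most 2 from v or lies in
   such a G'-free hyperedge through v, or the same holds with v and w swapped.
   Orienting every conflict between hyperedges of E_2 accordingly gives
   out-degrees D = O(L_1^2 L_2^2), and greedily colouring a vertex of
   in-degree at most D last shows that 2D + 1 colours suffice. *)

Lemma card_setU_le (T : finType) (A B : {set T}) : #|A :|: B| <= #|A| + #|B|.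
Proof. by rewrite cardsU leq_subr. Qed.

Lemma card_bigcup_le (I T : finType) (P : pred I) (F : I -> {set T}) :
  #|\bigcup_(i | P i) F i| <= \sum_(i | P i) #|F i|.
Proof.
elim/big_rec2: _ => [|i n U _ IH]; first by rewrite cards0.
by rewrite (leq_trans (card_setU_le _ _)) // leq_add2l.
Qed.

Lemma card_bigcup_le_mul (I T : finType) (A : {set I}) (F : I -> {set T}) k :
  (forall i, i \in A -> #|F i| <= k) -> #|\bigcup_(i in A) F i| <= #|A| * k.
Proof.
move=> hF; rewrite (leq_trans (card_bigcup_le _ _)) // -sum_nat_const.
exact: leq_sum.
Qed.

Lemma card_setId_sum (T : finType) (A : {set T}) (P : pred T) :
  #|[set y in A | P y]| = \sum_(y in A) P y.
Proof. by rewrite -big_mkcondr /= sum1_card; apply: eq_card => y; rewrite !inE. Qed.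

Lemma card3_eq (T : finType) (e : {set T}) a b c : #|e| = 3 ->
  a \in e -> b \in e -> c \in e -> a != b -> a != c -> b != c ->
  e = [set a; b; c].
Proof.
move=> he ae be ce ab ac bc; apply/eqP; rewrite eq_sym eqEcard; apply/andP; split.
  by apply/subsetP => z; rewrite !inE => /orP [/orP [] | ] /eqP ->.
by rewrite he -setUA cardsU1 cards2 bc !inE negb_or ab ac.
Qed.

Lemma card_preim_partition_le (T : finType) k (f : T -> 'I_k) (A : {set T}) :
  #|preim_partition f A| <= k.
Proof.
have := leq_imset_card (fun i => [set x in A | i == f x]) [set: 'I_k].
rewrite cardsT card_ord; apply: leq_trans; apply/subset_leq_card/subsetP.
by move=> B /imsetP [x _ ->]; apply: imset_f.
Qed.

Lemma mem_preim_partition (T : finType) (rT : eqType) (f : T -> rT) (A B : {set T})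
    x y :
  B \in preim_partition f A -> x \in B -> y \in B -> f x = f y.
Proof. by case/imsetP => z _ -> /setIdP [_ /eqP <-] /setIdP [_ /eqP <-]. Qed.

Section BoundedOutdegreeColoring.

Variables (T : finType) (conflict : rel T) (out : T -> {set T}) (D : nat).
Hypothesis conflict_sym : symmetric conflict.
Hypothesis conflict_out :
  forall x y, x != y -> conflict x y -> (y \in out x) || (x \in out y).
Hypothesis card_out_le : forall x, #|out x| <= D.

Lemma exists_small_indegree (A : {set T}) : A != set0 ->
  exists2 x, x \in A & #|[set y in A | x \in out y]| <= D.
Proof.
case/set0Pn=> x0 Ax0; set indeg := fun x => #|[set y in A | x \in out y]|.
have [x Ax xmin] := arg_minnP indeg Ax0; exists x => //.
have sum_indeg : \sum_(z in A) indeg z <= #|A| * D.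
  rewrite (eq_bigr (fun z => \sum_(y in A) (z \in out y : nat))); last first.
    by move=> z _; rewrite /indeg card_setId_sum.
  rewrite exchange_big /= -sum_nat_const; apply: leq_sum => y _.
  rewrite (leq_trans _ (card_out_le y)) // -card_setId_sum.
  by apply/subset_leq_card/subsetP => z; rewrite inE => /andP [].
have A_gt0 : 0 < #|A| by apply/card_gt0P; exists x0.
by rewrite -(leq_pmul2l A_gt0) (leq_trans _ sum_indeg) // -sum_nat_const leq_sum.
Qed.

Lemma bounded_outdegree_coloring (A : {set T}) :
  exists f : T -> 'I_(2 * D).+1,
    {in A &, forall x y, x != y -> conflict x y -> f x != f y}.
Proof.
move: {2}#|A| (leqnn #|A|) => n; elim: n A => [|n IH] A hA.
  by exists (fun _ => ord0) => x y; move: hA; rewrite leqn0 cards_eq0 => /eqP ->; rewrite inE.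
have [->|A0] := eqVneq A set0; first by exists (fun _ => ord0) => x y; rewrite inE.
have [x Ax indeg_x] := exists_small_indegree A0.
have [g g_ok] : exists g : T -> 'I_(2 * D).+1,
    {in A :\ x &, forall x0 y0, x0 != y0 -> conflict x0 y0 -> g x0 != g y0}.
  by apply: IH; move: hA; rewrite (cardsD1 x) Ax.
set nbrs := [set y in A :\ x | conflict x y].
have nbrs_sub : nbrs \subset out x :|: [set y in A | x \in out y].
  apply/subsetP => y; rewrite !inE => /andP [/andP [yx Ay] cxy].
  have xy : x != y by rewrite eq_sym.
  by case/orP: (conflict_out xy cxy) => ->; rewrite ?Ay ?orbT.
have card_nbrs : #|[set g y | y in nbrs]| <= 2 * D.
  rewrite (leq_trans (leq_imset_card _ _)) // (leq_trans (subset_leq_card nbrs_sub)) //.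
  by rewrite (leq_trans (card_setU_le _ _)) // mul2n -addnn leq_add.
have [k k_free] : exists k, k \notin [set g y | y in nbrs].
  apply/existsP; rewrite -negb_forall; apply: contraTN card_nbrs => /forallP all_used.
  have : #|[set: 'I_(2 * D).+1]| <= #|[set g y | y in nbrs]|.
    by apply/subset_leq_card/subsetP => i _; apply: all_used.
  by rewrite cardsT card_ord -ltnNge.
have g_nbrs z : z \in A -> z != x -> conflict x z -> g z \in [set g y | y in nbrs].
  by move=> Az zx cxz; apply: imset_f; rewrite !inE zx Az.
exists (fun z => if z == x then k else g z) => x0 y0 Ax0 Ay0 x0y0 c0.
case: (eqVneq x0 x) => [ex0|x0x]; case: (eqVneq y0 x) => [ey0|y0x].
- by rewrite ex0 ey0 eqxx in x0y0.
- by apply: contraNneq k_free => ->; apply: g_nbrs; rewrite // -ex0.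
- by apply: contraNneq k_free => <-; apply: g_nbrs; rewrite // -ey0 conflict_sym.
- by apply: g_ok; rewrite // !inE ?x0x ?y0x.
Qed.

End BoundedOutdegreeColoring.

Section SparseEdges.

Variables (T : finType) (E : {set {set T}}).
Hypothesis card_edge : {in E, forall e : {set T}, #|e| = 3}.

Definition star v u := [set e in E | (v \in e) && (u \in e)].

Lemma star_sym v u : star v u = star u v.
Proof. by apply/setP => e; rewrite !inE [(v \in e) && _]andbC. Qed.

Definition sunflower v (F : {set {set T}}) :=
  [&& F \subset E, [forall f in F, v \in f] &
      [forall f1 in F, forall f2 in F, (f1 != f2) ==> (f1 :&: f2 == [set v])]].

Definition max_sunflower v := [arg max_(F > set0 | sunflower v F) #|F|].

Definition petals v := \bigcup_(f in max_sunflower v) (f :\ v).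

Lemma sunflower0 v : sunflower v set0.
Proof.
by rewrite /sunflower sub0set; apply/and3P; split=> //; apply/forallP => f; rewrite inE.
Qed.

Lemma max_sunflowerP v :
  sunflower v (max_sunflower v) /\
  forall F, sunflower v F -> #|F| <= #|max_sunflower v|.
Proof. by rewrite /max_sunflower; case: arg_maxnP; first exact: sunflower0. Qed.

Lemma mem_max_sunflower v f : f \in max_sunflower v -> f \in E /\ v \in f.
Proof.
case: (max_sunflowerP v) => /and3P [/subsetP sFE /forallP Fv _] _ fF.
by split; [apply: sFE | have := Fv f; rewrite fF].
Qed.

Lemma card_edgeD1 v e : e \in E -> v \in e -> #|e :\ v| = 2.
Proof. by move=> eE ve; have := cardsD1 v e; rewrite ve card_edge // => -[]. Qed.

Lemma notin_petals v : v \notin petals v.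
Proof. by apply/bigcupP => -[f _]; rewrite !inE eqxx. Qed.

Lemma card_petals v : #|petals v| <= #|max_sunflower v| * 2.
Proof.
apply: card_bigcup_le_mul => f /mem_max_sunflower [fE vf].
by rewrite card_edgeD1.
Qed.

Lemma edge_meets_petals v e :
  e \in E -> v \in e -> exists2 u, u \in e :\ v & u \in petals v.
Proof.
(* Otherwise [e] could be added to the maximum sunflower at [v]. *)
move=> eE ve; apply/exists_inP; apply: contraT; rewrite negb_exists_in => /forall_inP no_petal.
have fresh u : u \in e -> u != v -> u \notin petals v.
  by move=> ue uv; apply: no_petal; rewrite !inE uv.
have in_petals f u : f \in max_sunflower v -> u \in f -> u != v -> u \in petals v.
  by move=> fF uf uv; apply/bigcupP; exists f; rewrite // !inE uv.
have [sunF maxF] := max_sunflowerP v.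
have eF : e \notin max_sunflower v.
  apply/negP => eF; have /card_gt0P [u] : 0 < #|e :\ v| by rewrite card_edgeD1.
  by rewrite !inE => /andP [uv ue]; case/negP: (fresh u ue uv); apply: in_petals eF ue uv.
have meet_v f : f \in max_sunflower v -> e :&: f = [set v].
  move=> fF; have [_ vf] := mem_max_sunflower fF; apply/setP => z; rewrite !inE.
  have [->|zv] := eqVneq z v; first by rewrite ve vf.
  by apply/negbTE/andP => -[ze zf]; case/negP: (fresh z ze zv); apply: in_petals fF zf zv.
suff /maxF : sunflower v (e |: max_sunflower v) by rewrite cardsU1 eF ltnn.
case/and3P: sunF => sFE /forall_inP Fv /forall_inP Fmeet.
apply/and3P; split.
- by rewrite subUset sub1set eE sFE.
- by apply/forall_inP => f /setU1P [->|/Fv].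
apply/forall_inP => f1 /setU1P [->|f1F]; apply/forall_inP => f2 /setU1P [->|f2F];
  apply/implyP => f12.
- by rewrite eqxx in f12.
- by rewrite meet_v.
- by rewrite setIC meet_v.
- by have /forall_inP/(_ f2 f2F)/implyP := Fmeet f1 f1F; apply.
Qed.

Variables (adj : rel T) (m s : nat).
Hypothesis adj_neq : forall v u, adj v u -> v != u.
Hypothesis adj_sym : symmetric adj.
Hypothesis card_sunflower : forall v F, sunflower v F -> #|F| <= m.
Hypothesis card_star_adj : forall v u, adj v u -> 2 * m < #|star v u|.
Hypothesis card_star_nonadj : forall v u, v != u -> ~~ adj v u -> #|star v u| <= s.

Definition nbr v := [set u | adj v u].

Definition nbr_free_edges v := [set e in E | (v \in e) && [forall u in e, ~~ adj v u]].

Definition reach v :=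
  v |: (nbr v :|: \bigcup_(u in nbr v) nbr u :|: \bigcup_(e in nbr_free_edges v) (e :\ v)).

(* With [E := Hedges X y] and [adj := adjG X y L2] this unfolds to [E2 X y L2]. *)
Definition sparse_edges :=
  E :\: [set e in E | [exists v1, exists v2, [&& v1 \in e, v2 \in e & adj v1 v2]]].

Lemma card_petals_le v : #|petals v| <= 2 * m.
Proof.
have [sunF _] := max_sunflowerP v.
by rewrite mulnC (leq_trans (card_petals v)) // leq_mul2r (card_sunflower sunF) orbT.
Qed.

Lemma nbr_sub_petals v : nbr v \subset petals v.
Proof.
apply/subsetP => w; rewrite inE => avw; apply: contraT => w_petal.
have star_sub : star v w \subset [set [set v; w; u] | u in petals v].
  apply/subsetP => e; rewrite inE => /andP [eE /andP [ve we]].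
  have [u /setD1P [uv ue] u_petal] := edge_meets_petals eE ve.
  apply/imsetP; exists u => //; apply: card3_eq => //.
  - exact: card_edge.
  - exact: adj_neq.
  - by rewrite eq_sym.
  - by apply: contraNneq w_petal => ->.
have := leq_trans (subset_leq_card star_sub) (leq_imset_card _ _).
by rewrite leqNgt (leq_ltn_trans (card_petals_le v)) ?card_star_adj.
Qed.

Lemma card_nbr_le v : #|nbr v| <= 2 * m.
Proof. exact: leq_trans (subset_leq_card (nbr_sub_petals v)) (card_petals_le v). Qed.

Lemma card_nbr_free_edges v : #|nbr_free_edges v| <= 2 * m * s.
Proof.
set U := [set u in petals v | ~~ adj v u].
have sub_stars : nbr_free_edges v \subset \bigcup_(u in U) star v u.
  apply/subsetP => e; rewrite inE => /andP [eE /andP [ve /forall_inP nonadj]].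
  have [u /setD1P [uv ue] u_petal] := edge_meets_petals eE ve.
  by apply/bigcupP; exists u; rewrite !inE ?u_petal ?nonadj ?eE ?ve.
have card_U : #|U| <= 2 * m.
  by rewrite (leq_trans _ (card_petals_le v)) // subset_leq_card // /U setIdE subsetIl.
apply: leq_trans (subset_leq_card sub_stars) (leq_trans (card_bigcup_le_mul (k := s) _) _).
  move=> u; rewrite inE => /andP [u_petal nonadj]; apply: card_star_nonadj => //.
  by apply: contraNneq (notin_petals v) => vu; rewrite {1}vu.
by rewrite leq_mul2r card_U orbT.
Qed.

Lemma sparse_edge_nbr_free v e : e \in sparse_edges -> v \in e -> e \in nbr_free_edges v.
Proof.
rewrite !inE => /andP [dense eE] ve; rewrite eE ve; apply/forall_inP => u ue.
apply: contra dense => avu; rewrite eE.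
by apply/existsP; exists v; apply/existsP; exists u; rewrite ve ue.
Qed.

Definition reach_bound := 1 + 2 * m * (1 + 2 * m + 2 * s).

Lemma card_reach v : #|reach v| <= reach_bound.
Proof.
have card_nbr2 : #|\bigcup_(u in nbr v) nbr u| <= 2 * m * (2 * m).
  apply: leq_trans (card_bigcup_le_mul (fun u _ => card_nbr_le u)) _.
  by rewrite leq_mul2r card_nbr_le orbT.
have card_nbr_free : #|\bigcup_(e in nbr_free_edges v) (e :\ v)| <= 2 * m * s * 2.
  apply: leq_trans (card_bigcup_le_mul (k := 2) _) _.
    by move=> e; rewrite inE => /andP [eE /andP [ve _]]; rewrite card_edgeD1.
  by rewrite leq_mul2r card_nbr_free_edges orbT.
rewrite /reach cardsU1 /reach_bound leq_add ?leq_b1 // (leq_trans (card_setU_le _ _)) //.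
apply: leq_trans (leq_add (card_setU_le _ _) (leqnn _)) _.
apply: leq_trans (leq_add (leq_add (card_nbr_le v) card_nbr2) card_nbr_free) _; nia.
Qed.

Definition out e1 := [set e2 in sparse_edges | (e1 \in sparse_edges) &&
  [exists v in e1, exists w in e2, w \in reach v]].

Definition out_bound := 3 * reach_bound * (2 * m * s).

Lemma card_out e1 : #|out e1| <= out_bound.
Proof.
have [e1_sparse|e1_dense] := boolP (e1 \in sparse_edges); last first.
  rewrite (_ : out e1 = set0) ?cards0 //; apply/setP => e2.
  by rewrite /out in_set0 inE (negbTE e1_dense) /= andbF.
have out_sub : out e1 \subset \bigcup_(v in e1) \bigcup_(w in reach v) nbr_free_edges w.
  apply/subsetP => e2; rewrite inE => /andP [e2_sparse /andP [_ ]].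
  case/exists_inP => v ve1 /exists_inP [w we2 wv].
  by apply/bigcupP; exists v => //; apply/bigcupP; exists w => //; apply: sparse_edge_nbr_free.
have card_e1 : #|e1| = 3 by apply: card_edge; move: e1_sparse; rewrite inE => /andP [].
apply: leq_trans (subset_leq_card out_sub) _.
apply: leq_trans (card_bigcup_le_mul (k := reach_bound * (2 * m * s)) _) _.
  move=> v _; apply: leq_trans (card_bigcup_le_mul (fun w _ => card_nbr_free_edges w)) _.
  by rewrite leq_mul2r card_reach orbT.
by rewrite card_e1 /out_bound mulnA.
Qed.

Definition conflict e1 e2 := [&& e1 \in sparse_edges, e2 \in sparse_edges &
  [exists e in E, (e :&: e1 != set0) && (e :&: e2 != set0)]].

Lemma conflict_sym : symmetric conflict.
Proof.
move=> e1 e2; apply/and3P/and3P => -[s1 s2 /exists_inP [e eE /andP [m1 m2]]];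
  by split => //; apply/exists_inP; exists e; rewrite ?m1 ?m2.
Qed.

Lemma exists_nbr_in_edge v e : e \in E -> v \in e -> e \notin nbr_free_edges v ->
  exists2 u, u \in e & adj v u.
Proof. by rewrite inE => eE ve; rewrite eE ve => /forall_inPn [u ue /negPn]; exists u. Qed.

Lemma mem_reach v w : w \in reach v = [|| w == v, adj v w,
  w \in \bigcup_(u in nbr v) nbr u | w \in \bigcup_(e in nbr_free_edges v) (e :\ v)].
Proof. by rewrite /reach in_setU1 !in_setU inE -orbA. Qed.

Lemma edge_in_reach v w e :
  e \in E -> v \in e -> w \in e -> (w \in reach v) || (v \in reach w).
Proof.
move=> eE ve we; have [->|vw] := eqVneq v w; first by rewrite mem_reach eqxx.
have nbr_reach x y : adj x y -> y \in reach x.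
  by move=> axy; rewrite mem_reach axy orbT.
have nbr2_reach x z y : adj x z -> adj z y -> y \in reach x.
  move=> axz azy; rewrite mem_reach; apply/or4P; apply: Or43.
  by apply/bigcupP; exists z; rewrite inE.
have free_reach x y f : f \in nbr_free_edges x -> y \in f -> y \in reach x.
  move=> fx yf; rewrite mem_reach; have [//|yx] := eqVneq y x; apply/or4P; apply: Or44.
  by apply/bigcupP; exists f; rewrite // !inE yx.
have [free_v|/(exists_nbr_in_edge eE ve) [u ue avu]] := boolP (e \in nbr_free_edges v).
  by rewrite (free_reach _ _ _ free_v we).
have [free_w|/(exists_nbr_in_edge eE we) [u' u'e awu']] := boolP (e \in nbr_free_edges w).
  by rewrite (free_reach _ _ _ free_w ve) orbT.
have [uw|uw] := eqVneq u w; first by rewrite -uw (nbr_reach _ _ avu).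
have [u'v|u'v] := eqVneq u' v; first by rewrite -u'v (nbr_reach _ _ awu') orbT.
have e_vwu : e = [set v; w; u].
  by apply: card3_eq => //; [exact: card_edge | exact: adj_neq | rewrite eq_sym].
have u'u : u' = u.
  by move: u'e; rewrite e_vwu !inE (negbTE u'v) eq_sym (negbTE (adj_neq awu')) => /eqP.
by rewrite (nbr2_reach _ u) // adj_sym -u'u.
Qed.

Lemma conflict_out e1 e2 :
  e1 != e2 -> conflict e1 e2 -> (e2 \in out e1) || (e1 \in out e2).
Proof.
move=> _ /and3P [s1 s2 /exists_inP [e eE /andP [/set0Pn [v /setIP [ve ve1]]]]].
case/set0Pn => w /setIP [we we2]; rewrite [e2 \in _]inE [e1 \in out _]inE s1 s2 /=.
case/orP: (edge_in_reach eE ve we) => [wv|vw].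
  by apply/orP; left; apply/exists_inP; exists v => //; apply/exists_inP; exists w.
by apply/orP; right; apply/exists_inP; exists w => //; apply/exists_inP; exists v.
Qed.

Lemma sparse_edges_partition : exists P : {set {set {set T}}},
  [/\ partition P sparse_edges, #|P| <= (2 * out_bound).+1 &
  forall B, B \in P -> forall e1 e2, e1 \in B -> e2 \in B -> e1 != e2 ->
    e1 :&: e2 = set0 /\ ~ (exists e, e \in E /\ e :&: e1 != set0 /\ e :&: e2 != set0)].
Proof.
have [f f_ok] := bounded_outdegree_coloring conflict_sym conflict_out card_out sparse_edges.
have partP := preim_partitionP f sparse_edges.
exists (preim_partition f sparse_edges); split => //; first exact: card_preim_partition_le.
move=> B BP e1 e2 e1B e2B e12.
have sparse_B e : e \in B -> e \in sparse_edges.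
  by case/and3P: partP => /eqP <- _ _ eB; apply/bigcupP; exists B.
have no_conflict : ~~ conflict e1 e2.
  apply/negP => c12; have := f_ok _ _ (sparse_B _ e1B) (sparse_B _ e2B) e12 c12.
  by rewrite (mem_preim_partition BP e1B e2B) eqxx.
move: no_conflict; rewrite /conflict !sparse_B //= => /exists_inPn no_common.
have e1E : e1 \in E by move: (sparse_B _ e1B); rewrite inE => /andP [].
split.
  apply/eqP; apply: contraNT (no_common _ e1E) => e12_meet; rewrite setIid e12_meet andbT.
  by rewrite -card_gt0 card_edge.
by case=> e [eE [m1 m2]]; case/negP: (no_common _ eE); rewrite m1 m2.
Qed.

End SparseEdges.

Lemma exists_nat_bound_lt (I : finType) (P : pred I) (F : I -> nat) (a : R) :
  (0 < a)%R -> (forall i, P i -> INR (F i) < a)%R ->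
  exists2 n, (forall i, P i -> F i <= n) & (INR n < a)%R.
Proof.
move=> a_gt0 F_lt; exists (\max_(i | P i) F i); first by move=> i; apply: leq_bigmax_cond.
by elim/big_ind: _ => // x y x_lt y_lt; rewrite /maxn; case: ltnP.
Qed.

Lemma out_bound_le (m s : nat) (a : R) :
  (1 < a)%R -> (INR m < a)%R -> (INR s < 3 * a)%R ->
  (INR (2 * out_bound m s).+1 <= 96 * a ^ 2 * (3 * a) ^ 2)%R.
Proof.
move=> a_gt1 m_lt s_lt.
rewrite /out_bound /reach_bound -!multE -!plusE S_INR !(mult_INR, plus_INR).
have -> : INR 1 = 1%R by [].
have -> : INR 2 = 2%R by rewrite /=; ring.
have -> : INR 3 = 3%R by rewrite /=; ring.
have m_ge0 := pos_INR m; have s_ge0 := pos_INR s.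
have ms_le : (INR m * INR s <= 3 * a ^ 2)%R by nra.
have reach_le : (1 + 2 * INR m * (1 + 2 * INR m + 2 * INR s) <= 19 * a ^ 2)%R by nra.
have reach_ge0 : (0 <= 1 + 2 * INR m * (1 + 2 * INR m + 2 * INR s))%R by nra.
have := Rmult_le_compat _ _ _ _ reach_ge0 (Rmult_le_pos _ _ m_ge0 s_ge0) reach_le ms_le.
have a2_ge1 : (1 <= a ^ 2)%R by nra.
have : (1 <= a ^ 2 * a ^ 2)%R by nra.
nra.
Qed.

Lemma adjGP N t (X : 'M[bool]_(N, t)) y L2 v u : v != u ->
  reflect (L2 <= INR #|star (Hedges X y) v u|)%R (adjG X y L2 v u).
Proof. by move=> vu; rewrite /adjG vu; case: Rle_dec => h; constructor. Qed.

Lemma adjG_neq N t (X : 'M[bool]_(N, t)) y L2 v u : adjG X y L2 v u -> v != u.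
Proof. by case/andP. Qed.

Lemma adjG_sym N t (X : 'M[bool]_(N, t)) y L2 : symmetric (adjG X y L2).
Proof.
move=> v u; have [->//|vu] := eqVneq v u.
have uv : u != v by rewrite eq_sym.
by apply/(adjGP _ _ _ vu)/(adjGP _ _ _ uv); rewrite star_sym.
Qed.

Lemma sunflower_config N t (X : 'M[bool]_(N, t)) y v F (L : R) :
  sunflower (Hedges X y) v F -> (L <= INR #|F|)%R -> config X y 1 L F.
Proof.
case/and3P => sFE _ /forall_inP Fmeet L_le; split=> //; split=> //.
exists [set v]; split=> [|e1 e2 e1F e2F e12]; first by rewrite cards1.
by apply/eqP; have /forall_inP/(_ e2 e2F)/implyP := Fmeet e1 e1F; apply.
Qed.

Lemma good3_sunflower_lt N t p (X : 'M[bool]_(N, t)) y v F :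
  good3 p X -> sunflower (Hedges X y) v F -> (INR #|F| < L1 t)%R.
Proof.
case=> no_config _ sunF; apply: Rnot_le_lt => L_le.
exact: no_config y F (sunflower_config sunF L_le).
Qed.

Lemma good3_L1_gt1 N t p (X : 'M[bool]_(N, t)) (S : {set 'I_t}) :
  good3 p X -> #|S| = 3 -> (1 < L1 t)%R.
Proof.
move=> good card_S; have [v vS] : exists v, v \in S by apply/card_gt0P; rewrite card_S.
(* A single hyperedge is a (3,1) configuration of size 1. *)
have sunS : sunflower (Hedges X (rX X S)) v [set S].
  have S_edge : S \in Hedges X (rX X S) by rewrite inE card_S !eqxx.
  rewrite /sunflower sub1set S_edge /=; apply/andP; split.
    by apply/forall_inP => f; rewrite inE => /eqP ->.
  by apply/forall_inP => f1 /set1P ->; apply/forall_inP => f2 /set1P ->; rewrite eqxx.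
by have := good3_sunflower_lt good sunS; rewrite cards1.
Qed.

Lemma good3_sunflower_bound N t p (X : 'M[bool]_(N, t)) y :
  good3 p X -> (0 < L1 t)%R ->
  exists2 m, (forall v F, sunflower (Hedges X y) v F -> #|F| <= m) & (INR m < L1 t)%R.
Proof.
move=> good L1_gt0.
have [|m m_ub m_lt] := @exists_nat_bound_lt _
    (fun F => [exists v, sunflower (Hedges X y) v F]) (fun F => #|F|) _ L1_gt0.
  by move=> F /existsP [v sunF]; apply: good3_sunflower_lt good sunF.
by exists m => // v F sunF; apply: m_ub; apply/existsP; exists v.
Qed.

Lemma star_nonadjG_bound N t (X : 'M[bool]_(N, t)) y L2 : (0 < L2)%R ->
  exists2 s, (forall v u, v != u -> ~~ adjG X y L2 v u -> #|star (Hedges X y) v u| <= s)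
    & (INR s < L2)%R.
Proof.
move=> L2_gt0.
have [|s s_ub s_lt] := @exists_nat_bound_lt _
    (fun q : 'I_t * 'I_t => (q.1 != q.2) && ~~ adjG X y L2 q.1 q.2)
    (fun q => #|star (Hedges X y) q.1 q.2|) _ L2_gt0.
  by move=> [v u] /andP [/= vu /(adjGP _ _ _ vu) nonadj]; apply: Rnot_le_lt.
by exists s => // v u vu nonadj; apply: (s_ub (v, u)); rewrite /= vu.
Qed.

Lemma star_adjG_gt N t (X : 'M[bool]_(N, t)) y L2 m v u :
  (2 * INR m < L2)%R -> adjG X y L2 v u -> 2 * m < #|star (Hedges X y) v u|.
Proof.
move=> m_lt avu; have /(adjGP _ _ _ (adjG_neq avu)) L2_le := avu.
apply/ltP/INR_lt; rewrite -multE mult_INR (_ : INR 2 = 2%R); last by rewrite /=; ring.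
lra.
Qed.

Theorem lemma6 (N t : nat) (p : R) (hp : (0 < p < 1)%R)
  (X : 'M[bool]_(N, t)) (S : {set 'I_t}) :
  good3 p X -> #|S| = 3 ->
  let y := rX X S in
  let E := Hedges X y in
  let L2 := (3 * L1 t)%R in
  exists P : {set {set {set 'I_t}}},
    partition P (E2 X y L2) /\
    (INR #|P| <= 96 * L1 t ^ 2 * L2 ^ 2)%R /\
    forall B, B \in P -> forall e1 e2, e1 \in B -> e2 \in B -> e1 != e2 ->
      e1 :&: e2 = set0 /\
      ~ (exists e, e \in E /\ e :&: e1 != set0 /\ e :&: e2 != set0).
Proof.
move=> good card_S y E L2; have L1_gt1 := good3_L1_gt1 good card_S.
have card_edge : {in E, forall e : {set 'I_t}, #|e| = 3}.
  by move=> e; rewrite inE => /andP [/eqP].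
have L1_gt0 : (0 < L1 t)%R by lra.
have L2_gt0 : (0 < L2)%R by rewrite /L2; lra.
have [m card_sunflower m_lt] := good3_sunflower_bound y good L1_gt0.
have [s card_star_nonadj s_lt] := star_nonadjG_bound X y L2_gt0.
have card_star_adj v u : adjG X y L2 v u -> 2 * m < #|star E v u|.
  by apply: star_adjG_gt; rewrite /L2; lra.
have [P [partP card_P P_ok]] := sparse_edges_partition card_edge (@adjG_neq _ _ X y L2)
  (adjG_sym X y L2) card_sunflower card_star_adj card_star_nonadj.
exists P; split=> //; split=> //.
exact: Rle_trans (le_INR _ _ (leP card_P)) (out_bound_le L1_gt1 m_lt s_lt).
Qed.
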